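(* Let $(X,d,\mu)$ be unbounded, with base point $a$, and assume $X$ is uniformly perfect at $a$ for radii $\ge1$ with constant $\kappa$, $\mu$ is doubling with constant $C_\mu$, and there are $s,C_s>0$ with $$\frac{\mu(B(a,r))}{\mu(B(a,R))}\ge C_s\Bigl(\frac rR\Bigr)^s\quad\text{whenever }1\le r\le R<\infty.$$ If $q>s$, then for every $x\in\widehat X$, $$\hat\mu_q(B_a(x,r))\simeq\begin{cases}\hat d(x)^q\,\mu\Bigl(B\Bigl(x,\dfrac{r}{\hat d(x)^2}\Bigr)\Bigr), & \text{if } r\le\tfrac13\hat d(x),\\[2mm] r^q\,\mu(B(a,1/r)), & \text{if } \tfrac16\hat d(x)\le r\le 2,\end{cases}$$ where the comparison constants in the first case depend only on $C_\mu$, and in the second case only on $C_\mu,\kappa,C_s$ and $q-s$.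
   Context: $\mu$ is a positive complete Borel measure on the metric space $(X,d)$ with $0<\mu(B)<\infty$ for every ball; balls are open, $B(x,r)=\{y\in X:d(x,y)<r\}$. $\mu$ is doubling if there is $C_\mu$ with $\mu(B(x,2r))\le C_\mu\mu(B(x,r))$ for all balls. $X$ is uniformly perfect at $a$ for radii $\ge1$ with constant $\kappa>1$ if $B(a,\kappa r)\setminus B(a,r)\ne\emptyset$ for all $r\ge1$. Sphericalization: write $|x|=d(x,a)$, $\widehat X=X\cup\{\infty\}$, $d_a(x,y)=\frac{d(x,y)}{(1+|x|)(1+|y|)}$ for $x,y\in X$, $d_a(x,\infty)=d_a(\infty,x)=\frac1{1+|x|}$, $d_a(\infty,\infty)=0$; $\hat d(x,y)=\inf\sum_{j=1}^k d_a(x_{j-1},x_j)$ over finite chains $x=x_0,\dots,x_k=y$ in $\widehat X$; $\hat d(x):=\hat d(x,\infty)=\frac1{1+|x|}$ (so $\hat d(\infty)=0$). $B_a(x,r)=\{y\in\widehat X:d_a(x,y)<r\}$. The measure $\hat\mu_q$ on $\widehat X$ is $d\hat\mu_q(x)=\frac{d\mu(x)}{(1+|x|)^q}$ on $X$ with $\hat\mu_q(\{\infty\})=0$. $A\simeq B$ means $C^{-1}B\le A\le CB$ for a constant $C>0$. *)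

From HB Require Import structures.
From mathcomp Require Import all_boot all_order all_algebra.
From mathcomp Require Import all_classical all_reals all_analysis.
Set Implicit Arguments. Unset Strict Implicit. Unset Printing Implicit Defensive.
Import Order.TTheory GRing.Theory Num.Theory.
Local Open Scope classical_set_scope.
Local Open Scope ring_scope.

Definition is_metric (R : realType) (X : Type) (d : X -> X -> R) : Prop :=
  (forall x y, 0 <= d x y) /\ (forall x y, d x y = 0 <-> x = y) /\
  (forall x y, d x y = d y x) /\ (forall x y z, d x z <= d x y + d y z).

Definition dball (R : realType) (X : Type) (d : X -> X -> R) (x : X) (r : R)
  : set X := [set y | d x y < r].

Definition dopen (R : realType) (X : Type) (d : X -> X -> R) (U : set X) : Prop :=
  forall x, U x -> exists2 e, 0 < e & dball d x e `<=` U.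

Definition unbounded (R : realType) (X : Type) (d : X -> X -> R) : Prop :=
  forall M : R, exists x y, M < d x y.

Definition unif_perfect_at (R : realType) (X : Type) (d : X -> X -> R)
  (a : X) (kappa : R) : Prop :=
  1 < kappa /\ forall r, 1 <= r -> exists y, ~ dball d a r y /\ dball d a (kappa * r) y.

Definition doubling (R : realType) (d0 : measure_display) (X : measurableType d0)
  (d : X -> X -> R) (mu : set X -> \bar R) (Cmu : R) : Prop :=
  forall x r, (mu (dball d x (2 * r)) <= Cmu%:E * mu (dball d x r))%E.

(* Sphericalization: hat X = option X, with None = infinity. *)
Definition da (R : realType) (X : Type) (d : X -> X -> R) (a : X)
  (x y : option X) : R :=
  match x, y with
  | Some x, Some y => d x y / ((1 + d a x) * (1 + d a y))
  | Some x, None => 1 / (1 + d a x)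
  | None, Some y => 1 / (1 + d a y)
  | None, None => 0
  end.

(* hat d(x) = hat d(x, infinity) = 1/(1+|x|), hat d(infinity) = 0 *)
Definition dhat (R : realType) (X : Type) (d : X -> X -> R) (a : X)
  (x : option X) : R :=
  match x with Some y => 1 / (1 + d a y) | None => 0 end.

Definition Ba (R : realType) (X : Type) (d : X -> X -> R) (a : X)
  (x : option X) (r : R) : set (option X) := [set y | da d a x y < r].

Definition muhat (R : realType) (d0 : measure_display) (X : measurableType d0)
  (d : X -> X -> R) (a : X) (mu : {measure set X -> \bar R}) (q : R)
  (A : set (option X)) : \bar R :=
  (\int[mu]_(y in [set y | A (Some y)]) ((1 + d a y) `^ (- q))%:E)%E.

From HB Require Import structures.
From mathcomp Require Import all_boot all_order all_algebra.
From mathcomp Require Import all_classical all_reals all_analysis.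
From mathcomp Require Import ring lra measurable_realfun.
Import Order.TTheory GRing.Theory Num.Theory.
Set Implicit Arguments. Unset Strict Implicit. Unset Printing Implicit Defensive.
Local Open Scope classical_set_scope.
Local Open Scope ring_scope.

(* Write A = 1 + |x| = 1 / dhat(x).  Within distance A/2 of x the weight
   (1 + |y|)^-q is comparable to A^-q, and for r <= dhat(x)/3 the ball
   B_a(x, r) is squeezed between B(x, r A^2 / 2) and B(x, 3 r A^2 / 2), so
   doubling gives the first case.
   For r >= dhat(x)/6, B_a(x, r) lies in {1 + |y| >= 1/(7r)}.  Cutting this
   region into the dyadic annuli around a, the lower mass bound lets their
   measures grow at most like 2^(k s) while the weights decay like 2^(-k q),
   so q > s makes the series geometric: this is the upper bound.  Conversely
   B_a(x, r) contains B_a(infinity, r/2) if r A >= 2 and B(x, A/8) otherwise;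
   B_a(infinity, r) contains a ball B(z, 1/r) around a point z with |z| of
   order 1/r given by uniform perfectness, and doubling compares these balls
   with B(a, 1/r). *)

Section powR_facts.
Variable R : realType.
Implicit Types (a b c p x : R).

Lemma powRV a x : 0 < a -> a^-1 `^ x = a `^ (- x).
Proof.
by move=> a0; rewrite /powR !gt_eqF ?invr_gt0 // lnV ?posrE // mulrN mulNr.
Qed.

Lemma powR_exprn a p k : 0 <= a -> (a ^+ k) `^ p = (a `^ p) ^+ k.
Proof.
by move=> a0; rewrite -powR_mulrn // -powRrM mulrC powRrM powR_mulrn ?powR_ge0.
Qed.

Lemma ler_powRN p a b : 0 <= p -> 0 < a -> a <= b -> b `^ (- p) <= a `^ (- p).
Proof.
move=> p0 a0 ab; have b0 := lt_le_trans a0 ab.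
rewrite !powRN lef_pV2 ?posrE ?powR_gt0 //.
by apply: ge0_ler_powR => //; rewrite nnegrE ltW.
Qed.

Lemma powR_lt1 a p : 1 < a -> p < 0 -> a `^ p < 1.
Proof.
move=> a1 p0; rewrite /powR gt_eqF ?(lt_trans ltr01) // -expR0 ltr_expR.
by rewrite nmulr_rlt0 // ln_gt0.
Qed.

Lemma powR_le_comparable a b c p : 0 < a -> 0 < b -> 1 <= c ->
  b <= c * a -> a <= c * b -> b `^ p <= c `^ `|p| * a `^ p.
Proof.
move=> a0 b0 c1 bca acb; have c0 := lt_le_trans ltr01 c1.
rewrite /powR !gt_eqF // -expRD ler_expR.
have lnb : ln b <= ln c + ln a by rewrite -lnM ?posrE // ler_ln ?posrE ?mulr_gt0.
have lna : ln a <= ln c + ln b by rewrite -lnM ?posrE // ler_ln ?posrE ?mulr_gt0.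
have : `|p * (ln b - ln a)| <= `|p| * ln c.
  by rewrite normrM ler_wpM2l //; apply/ler_normlP; split; lra.
by rewrite mulrBr => /ler_normlP [_ ?]; lra.
Qed.

Lemma archi_bound_lt_expr2 x : 0 <= x -> x < 2 ^+ Num.Def.archi_bound x.
Proof.
move=> x0; apply: lt_le_trans (archi_boundP x0) _.
by rewrite -natrX ler_nat ltnW // ltn_expl.
Qed.

Lemma exists_dyadic_shell (rho t : R) : 0 < rho -> rho <= t ->
  exists k, 2 ^+ k * rho <= t < 2 ^+ k.+1 * rho.
Proof.
move=> rho0 rhot; have t0 := lt_le_trans rho0 rhot.
have [|k tk kmin] := ex_minnP (P := fun k => t < 2 ^+ k.+1 * rho).
  have /ltW/archi_bound_lt_expr2 := divr_gt0 t0 rho0.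
  set N := Num.Def.archi_bound _ => tN; exists N.
  rewrite -ltr_pdivrMr // (lt_le_trans tN) // exprS ler_peMl ?exprn_ge0 //.
  by rewrite ler1n.
exists k; rewrite tk andbT; case: k tk kmin => [|k] _ kmin.
  by rewrite expr0 mul1r.
by rewrite leNgt; apply/negP => /kmin; rewrite ltnn.
Qed.

End powR_facts.

Section integral_facts.
Context (R : realType) (d0 : measure_display) (X : measurableType d0)
  (mu : {measure set X -> \bar R}).
Local Open Scope ereal_scope.

(* No measurability is needed: a nonnegative integral is the supremum of the
   integrals of the simple functions below the integrand. *)
Lemma ge0_le_integral_subset (D E : set X) (f g : X -> \bar R) :
  (forall x, D x -> 0 <= f x) -> (forall x, E x -> 0 <= g x) ->
  (forall x, D x -> E x /\ f x <= g x) ->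
  \int[mu]_(x in D) f x <= \int[mu]_(x in E) g x.
Proof.
move=> f0 g0 fg; rewrite !ge0_integralE //.
apply: ereal_sup_le => _ /= [h hf <-]; exists h => //= x.
apply: le_trans (hf x) _; rewrite /patch.
case: ifPn => [/[!inE] /fg [Ex fgx]|_]; first by rewrite ifT ?inE.
by case: ifPn => // /[!inE] /g0.
Qed.

End integral_facts.

Section geometric.
Local Open Scope ereal_scope.

Lemma nneseries_geometric_le (R : realType) (c z : R) :
  (0 <= c)%R -> (0 < z < 1)%R ->
  \sum_(n <oo) (c * z ^+ n)%:E <= (c / (1 - z))%:E.
Proof.
move=> c0 /andP[z0 z1]; apply: lime_le.
  apply: is_cvg_nneseries => n _ _.
  by rewrite (_ : 0%R = 0%:E) // lee_fin mulr_ge0 // exprn_ge0 // ltW.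
apply: nearW => n; rewrite sumEFin lee_fin.
by have := geometric_le_lim n c0 z0; rewrite gtr0_norm //; apply.
Qed.

End geometric.

Section metric_facts.
Context (R : realType) (X : Type) (d : X -> X -> R).
Hypothesis hm : is_metric d.

Lemma metric_ge0 x y : 0 <= d x y. Proof. by case: hm. Qed.
Lemma metric_sym x y : d x y = d y x. Proof. by case: hm => _ [_ []]. Qed.
Lemma metric_triangle x y z : d x z <= d x y + d y z.
Proof. by case: hm => _ [_ [_]]. Qed.

Lemma dopen_dball x r : dopen d (dball d x r).
Proof.
move=> y; rewrite /dball /= => xy; exists (r - d x y); first by rewrite subr_gt0.
by move=> z; rewrite /dball /=; have := metric_triangle x y z; lra.
Qed.

Lemma one_plus_dist_ge1 a x : 1 <= 1 + d a x.
Proof. by rewrite lerDl metric_ge0. Qed.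

Lemma one_plus_dist_gt0 a x : 0 < 1 + d a x.
Proof. exact: lt_le_trans ltr01 (one_plus_dist_ge1 a x). Qed.

Lemma Ba_SomeE a x r y :
  Ba d a (Some x) r (Some y) = (d x y < r * ((1 + d a x) * (1 + d a y))).
Proof. by rewrite /Ba /da /= ltr_pdivrMr // mulr_gt0 // one_plus_dist_gt0. Qed.

Lemma Ba_NoneE a r y : Ba d a None r (Some y) = (1 < r * (1 + d a y)).
Proof. by rewrite /Ba /da /= ltr_pdivrMr // one_plus_dist_gt0. Qed.

Lemma le_dhat_divE a x r c : 0 < c ->
  (dhat d a (Some x) / c <= r) = (1 <= r * c * (1 + d a x)).
Proof. by move=> c0; rewrite /dhat !ler_pdivrMr ?one_plus_dist_gt0. Qed.

Lemma ge_dhat_divE a x r c : 0 < c ->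
  (r <= dhat d a (Some x) / c) = (r * c * (1 + d a x) <= 1).
Proof. by move=> c0; rewrite /dhat !ler_pdivlMr ?one_plus_dist_gt0. Qed.

End metric_facts.

Section metric_measure_space.
Context (R : realType) (d0 : measure_display) (X : measurableType d0)
  (d : X -> X -> R) (mu : {measure set X -> \bar R}).
Implicit Types (x y z : X) (r rho : R).
Hypothesis hm : is_metric d.
Hypothesis dopen_measurable : forall U, dopen d U -> measurable U.
Hypothesis ball_fin_pos : forall x r, 0 < r ->
  (0 < mu (dball d x r))%E /\ (mu (dball d x r) < +oo)%E.

Lemma measurable_dball x r : measurable (dball d x r).
Proof. exact/dopen_measurable/dopen_dball. Qed.

Definition vol x r := fine (mu (dball d x r)).

Lemma volE x r : 0 < r -> mu (dball d x r) = (vol x r)%:E.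
Proof.
move=> r0; have [mu_gt0 mu_fin] := ball_fin_pos x r0.
by rewrite /vol fineK // ge0_fin_numE // ltW.
Qed.

Lemma vol_gt0 x r : 0 < r -> 0 < vol x r.
Proof. by move=> r0; rewrite -lte_fin -volE //; case: (ball_fin_pos x r0). Qed.

Lemma le_vol_subset x r y r' : 0 < r -> 0 < r' ->
  dball d x r `<=` dball d y r' -> vol x r <= vol y r'.
Proof.
move=> r0 r'0 sub; rewrite -lee_fin -!volE //.
by apply: le_measure sub; rewrite inE; exact: measurable_dball.
Qed.

Lemma le_vol x r r' : 0 < r -> r <= r' -> vol x r <= vol x r'.
Proof.
move=> r0 rr'; apply: le_vol_subset => //; first exact: lt_le_trans rr'.
by move=> y; rewrite /dball /= => /lt_le_trans; apply.
Qed.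

Section doubling.
Variable Cmu : R.
Hypothesis hdb : doubling d mu Cmu.

Lemma vol_doubling x r : 0 < r -> vol x (2 * r) <= Cmu * vol x r.
Proof.
by move=> r0; rewrite -lee_fin EFinM -!volE ?mulr_gt0 //; exact: hdb.
Qed.

Lemma doubling_const_ge1 (x : X) : 1 <= Cmu.
Proof.
have v1 := vol_gt0 x ltr01.
rewrite -(ler_pM2r v1) mul1r (le_trans _ (vol_doubling x ltr01)) //.
by apply: le_vol => //; lra.
Qed.

Lemma vol_doublingn x r n : 0 < r -> vol x (2 ^+ n * r) <= Cmu ^+ n * vol x r.
Proof.
move=> r0; elim: n => [|n IH]; first by rewrite !expr0 !mul1r.
have Cmu0 : 0 <= Cmu := le_trans ler01 (doubling_const_ge1 x).
rewrite !exprS -!mulrA (le_trans (vol_doubling _ _)) ?ler_wpM2l //.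
by rewrite mulr_gt0 // exprn_gt0.
Qed.

Lemma vol_le_shift x rho z rho' n : 0 < rho -> 0 < rho' ->
  d z x + rho <= 2 ^+ n * rho' -> vol x rho <= Cmu ^+ n * vol z rho'.
Proof.
move=> rho0 rho'0 zx; apply: le_trans (vol_doublingn z n rho'0).
apply: le_vol_subset => //; first by rewrite mulr_gt0 ?exprn_gt0.
by move=> y; rewrite /dball /=; have := metric_triangle hm z x y; lra.
Qed.

End doubling.

Section weighted_measure.
Variables (a : X) (q : R).
Local Notation muhat := (muhat d a mu q).

Lemma le_muhat (A B : set (option X)) :
  (forall y, A (Some y) -> B (Some y)) -> (muhat A <= muhat B)%E.
Proof.
move=> AB; apply: ge0_le_integral_subset => y; rewrite ?lee_fin ?powR_ge0 //.
by move/AB.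
Qed.

Lemma muhat_ge_ball (A : set (option X)) z r c : 0 < r -> 0 <= c ->
  (forall y, d z y < r -> A (Some y) /\ c <= (1 + d a y) `^ (- q)) ->
  (c%:E * (vol z r)%:E <= muhat A)%E.
Proof.
move=> r0 c0 zA; rewrite -volE // -integral_cst //; last exact: measurable_dball.
apply: ge0_le_integral_subset => y; rewrite ?lee_fin ?powR_ge0 //.
by move=> /zA [Ay cy]; split; rewrite ?lee_fin.
Qed.

Lemma muhat_le_ball (A : set (option X)) z r c : 0 < r -> 0 <= c ->
  (forall y, A (Some y) -> d z y < r /\ (1 + d a y) `^ (- q) <= c) ->
  (muhat A <= c%:E * (vol z r)%:E)%E.
Proof.
move=> r0 c0 Az; rewrite -volE // -integral_cst //; last exact: measurable_dball.
apply: ge0_le_integral_subset => y; rewrite ?lee_fin ?powR_ge0 //.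
by move=> /Az [zy yc]; split; rewrite ?lee_fin.
Qed.

Lemma comparable_near x y : d x y <= (1 + d a x) / 2 ->
  1 + d a y <= 2 * (1 + d a x) /\ 1 + d a x <= 2 * (1 + d a y).
Proof.
move=> xy; have := metric_triangle hm a x y; have := metric_triangle hm a y x.
rewrite (metric_sym hm y x); have := metric_ge0 hm a x; lra.
Qed.

Lemma weight_comparable_near x y : d x y <= (1 + d a x) / 2 ->
  (1 + d a y) `^ (- q) <= 2 `^ `|q| * (1 + d a x) `^ (- q) /\
  (1 + d a x) `^ (- q) <= 2 `^ `|q| * (1 + d a y) `^ (- q).
Proof.
move=> /comparable_near [yx xy]; rewrite -(normrN q).
by split; apply: powR_le_comparable; rewrite ?one_plus_dist_gt0 ?ler1n.
Qed.

Section small_balls.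
Variable Cmu : R.
Hypothesis hdb : doubling d mu Cmu.

Lemma dball_sub_Ba_small x r y : 0 < r -> r * (1 + d a x) <= 1 / 3 ->
  d x y < r * (1 + d a x) ^+ 2 / 2 -> Ba d a (Some x) r (Some y).
Proof.
rewrite (Ba_SomeE hm); set A := 1 + d a x; set u := r * A => r0 u3 xy.
have u0 : 0 < u by rewrite mulr_gt0 // one_plus_dist_gt0.
have xy0 := metric_ge0 hm x y.
have tri : A - d x y <= 1 + d a y.
  by have := metric_triangle hm a y x; rewrite (metric_sym hm y x) /A; lra.
have uA : r * A ^+ 2 = u * A by rewrite /u expr2 mulrA.
rewrite mulrA -/u; rewrite uA in xy.
have := ler_wpM2l (ltW u0) tri; have : u * d x y <= d x y / 3 by nra.
rewrite mulrBr; lra.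
Qed.

Lemma Ba_small_sub_dball x r y : 0 < r -> r * (1 + d a x) <= 1 / 3 ->
  Ba d a (Some x) r (Some y) -> d x y < 3 / 2 * (r * (1 + d a x) ^+ 2).
Proof.
rewrite (Ba_SomeE hm); set A := 1 + d a x; set u := r * A => r0 u3 xy.
have u0 : 0 < u by rewrite mulr_gt0 // one_plus_dist_gt0.
have xy0 := metric_ge0 hm x y.
have tri : 1 + d a y <= A + d x y.
  by have := metric_triangle hm a x y; rewrite /A; lra.
have uA : r * A ^+ 2 = u * A by rewrite /u expr2 mulrA.
rewrite uA; rewrite mulrA -/u in xy; nra.
Qed.

Lemma muhat_Ba_small_ge x r : 0 < r -> r * (1 + d a x) <= 1 / 3 ->
  (((2 `^ `|q|)^-1 * (1 + d a x) `^ (- q))%:E *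
     (vol x (r * (1 + d a x) ^+ 2 / 2))%:E <= muhat (Ba d a (Some x) r))%E.
Proof.
move=> r0 u3; apply: muhat_ge_ball.
- by rewrite divr_gt0 ?mulr_gt0 ?exprn_gt0 ?(one_plus_dist_gt0 hm).
- by rewrite mulr_ge0 ?invr_ge0 ?powR_ge0.
move=> y xy; split; first exact: dball_sub_Ba_small.
rewrite ler_pdivrMl ?powR_gt0 //; apply: (weight_comparable_near _).2.
apply/ltW/(lt_le_trans xy); rewrite expr2 mulrA ler_pM2r // ler_piMl //; last lra.
exact/ltW/one_plus_dist_gt0.
Qed.

Lemma muhat_Ba_small_le x r : 0 < r -> r * (1 + d a x) <= 1 / 3 ->
  (muhat (Ba d a (Some x) r) <=
   (2 `^ `|q| * (1 + d a x) `^ (- q))%:E *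
     (vol x (2 * (r * (1 + d a x) ^+ 2)))%:E)%E.
Proof.
move=> r0 u3; have A0 := one_plus_dist_gt0 hm a x.
apply: muhat_le_ball; rewrite ?mulr_ge0 ?powR_ge0 ?mulr_gt0 ?exprn_gt0 //.
move=> y /(Ba_small_sub_dball r0 u3) xy; split.
  by apply: lt_le_trans xy _; rewrite ler_pM2r ?mulr_gt0 ?exprn_gt0 //; lra.
apply: (weight_comparable_near _).1; apply/ltW/(lt_le_trans xy).
rewrite expr2 mulrA mulrA ler_pdivlMr //; nra.
Qed.

Lemma muhat_Ba_small x r : 0 < r -> r <= dhat d a (Some x) / 3 ->
  (((2 `^ `|q| * Cmu)^-1)%:E * ((dhat d a (Some x) `^ q)%:E
       * mu (dball d x (r / dhat d a (Some x) ^+ 2))) <=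
     muhat (Ba d a (Some x) r) /\
   muhat (Ba d a (Some x) r) <=
     (2 `^ `|q| * Cmu)%:E * ((dhat d a (Some x) `^ q)%:E
       * mu (dball d x (r / dhat d a (Some x) ^+ 2))))%E.
Proof.
move=> r0; rewrite (ge_dhat_divE hm) // => rA3; rewrite /dhat.
set A := 1 + d a x in rA3 *; have A0 : 0 < A := one_plus_dist_gt0 hm a x.
have u3 : r * A <= 1 / 3 by lra.
have rho0 : 0 < r * A ^+ 2 by rewrite mulr_gt0 ?exprn_gt0.
have Cmu0 : 0 < Cmu := lt_le_trans ltr01 (doubling_const_ge1 hdb x).
rewrite div1r powRV // exprVn invrK volE //; split.
- apply: le_trans (muhat_Ba_small_ge r0 u3); rewrite -!EFinM lee_fin.
  rewrite invfM mulrACA ler_pM2l ?mulr_gt0 ?invr_gt0 ?powR_gt0 //.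
  rewrite ler_pdivrMl //; have := vol_doubling hdb x (divr_gt0 rho0 (ltr0Sn R 1)).
  by rewrite mulrC divfK ?pnatr_eq0.
- apply: le_trans (muhat_Ba_small_le r0 u3) _; rewrite -!EFinM lee_fin.
  rewrite mulrACA ler_pM2l ?mulr_gt0 ?powR_gt0 //.
  exact: vol_doubling.
Qed.

End small_balls.

Section large_balls_lower.
Variables (Cmu kappa : R).
Hypothesis hdb : doubling d mu Cmu.
Hypothesis hup : unif_perfect_at d a kappa.
Hypothesis q_ge0 : 0 <= q.

(* Enough doublings of B(z, rho) to cover B(a, rho) when |z| < 2 kappa rho. *)
Definition perfect_steps := Num.Def.archi_bound (2 * kappa + 1).

Definition infty_ball_const := (2 * kappa + 3) `^ (- q) / Cmu ^+ perfect_steps.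

Lemma muhat_Ba_infty_ge r : 0 < r -> r <= 2 ->
  ((infty_ball_const * r `^ q)%:E * (vol a r^-1)%:E <= muhat (Ba d a None r))%E.
Proof.
move=> r0 r2; set rho := r^-1; have rho0 : 0 < rho by rewrite invr_gt0.
have [kappa1 /(_ (2 * rho))] := hup; have rr : r * rho = 1 by rewrite mulfV ?gt_eqF.
case=> [|z []]; first by nra.
rewrite /dball /= => /negP; rewrite -leNgt => z_ge z_lt.
have Cmu0 : 0 < Cmu := lt_le_trans ltr01 (doubling_const_ge1 hdb a).
have steps : 2 * kappa + 1 < 2 ^+ perfect_steps.
  by apply: archi_bound_lt_expr2; lra.
have vol_z : vol a rho <= Cmu ^+ perfect_steps * vol z rho.
  apply: vol_le_shift => //; rewrite (metric_sym hm).
  have : (2 * kappa + 1) * rho <= 2 ^+ perfect_steps * rho.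
    by rewrite ler_pM2r // ltW.
  nra.
pose c := (2 * kappa + 3) `^ (- q) * r `^ q.
apply: le_trans (muhat_ge_ball (z := z) (c := c) rho0 _ _).
- rewrite /c -EFinM lee_fin /infty_ball_const -!mulrA ler_wpM2l ?powR_ge0 //.
  by rewrite mulrCA ler_wpM2l ?powR_ge0 // ler_pdivrMl ?exprn_gt0.
- by rewrite /c mulr_ge0 ?powR_ge0.
move=> y zy; have := metric_triangle hm a z y; have := metric_triangle hm a y z.
rewrite (metric_sym hm y z) => za zy'; have y_far : rho < 1 + d a y by lra.
have ry : r * rho < r * (1 + d a y) by rewrite ltr_pM2l.
split; first by rewrite (Ba_NoneE hm); lra.
rewrite /c; have -> : r `^ q = rho `^ (- q) by rewrite -powRV // invrK.
rewrite -powRM ?(ltW rho0) //; last lra.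
by apply: ler_powRN => //; rewrite ?one_plus_dist_gt0 //; nra.
Qed.

Lemma Ba_infty_sub_Ba x r y : 2 <= r * (1 + d a x) ->
  Ba d a None (r / 2) (Some y) -> Ba d a (Some x) r (Some y).
Proof.
rewrite (Ba_NoneE hm) (Ba_SomeE hm); set A := 1 + d a x; set B := 1 + d a y.
move=> rA y_far; have B1 : 1 <= B := one_plus_dist_ge1 hm a y.
have := metric_triangle hm x a y; rewrite (metric_sym hm x a).
have : 2 * B <= r * A * B by rewrite ler_pM2r ?(one_plus_dist_gt0 hm).
have : 2 * A < r * B * A by rewrite ltr_pM2r ?(one_plus_dist_gt0 hm) //; lra.
rewrite /A /B; nra.
Qed.

Lemma muhat_Ba_far_ge x r : 0 < r -> r <= 2 -> 2 <= r * (1 + d a x) ->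
  ((infty_ball_const * 2 `^ (- q) * r `^ q)%:E * (vol a r^-1)%:E <=
   muhat (Ba d a (Some x) r))%E.
Proof.
move=> r0 r2 rA; have r20 : 0 < r / 2 by rewrite divr_gt0.
apply: le_trans (le_muhat (fun y => Ba_infty_sub_Ba rA)).
apply: le_trans (muhat_Ba_infty_ge r20 _); last lra.
rewrite -!EFinM lee_fin powRM ?invr_ge0 ?(ltW r0) // powRV //.
rewrite [r `^ q * _]mulrC mulrA.
have ri0 : 0 < r^-1 by rewrite invr_gt0.
rewrite ler_wpM2l ?le_vol // ?invf_div; last lra.
rewrite !mulr_ge0 ?powR_ge0 ?invr_ge0 ?exprn_ge0 //.
by rewrite (le_trans ler01) // (doubling_const_ge1 hdb a).
Qed.

Lemma muhat_Ba_near_ge x r : 0 < r -> r * (1 + d a x) < 2 ->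
  1 <= r * 6 * (1 + d a x) ->
  (((9 / 4) `^ (- q) / Cmu ^+ 6 * r `^ q)%:E * (vol a r^-1)%:E <=
   muhat (Ba d a (Some x) r))%E.
Proof.
set A := 1 + d a x => r0 rA2 rA6; have A0 : 0 < A := one_plus_dist_gt0 hm a x.
have Cmu0 : 0 < Cmu := lt_le_trans ltr01 (doubling_const_ge1 hdb a).
have ri0 : 0 < r^-1 by rewrite invr_gt0.
have rr : r * r^-1 = 1 by rewrite mulfV ?gt_eqF.
have vol_x : vol a r^-1 <= Cmu ^+ 6 * vol x (A / 8).
  apply: vol_le_shift; rewrite ?divr_gt0 //.
  have : r^-1 <= 6 * A by rewrite -(ler_pM2l r0) rr mulrA.
  have -> : 2 ^+ 6 * (A / 8) = 8 * A by rewrite !exprS expr0; field.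
  by rewrite (metric_sym hm) /A; lra.
pose c := (9 / 4) `^ (- q) * r `^ q.
apply: le_trans (muhat_ge_ball (z := x) (r := A / 8) (c := c) _ _ _).
- rewrite /c -!EFinM lee_fin -!mulrA ler_wpM2l ?powR_ge0 //.
  by rewrite mulrCA ler_wpM2l ?powR_ge0 // ler_pdivrMl ?exprn_gt0.
- by rewrite divr_gt0.
- by rewrite /c mulr_ge0 ?powR_ge0.
move=> y xy; have := metric_triangle hm a x y; have := metric_triangle hm a y x.
rewrite (metric_sym hm y x) -/A => ayx axy; split.
  rewrite (Ba_SomeE hm) -/A mulrA.
  have : 1 + d a y <= r * 6 * A * (1 + d a y).
    by rewrite ler_peMl ?(ltW (one_plus_dist_gt0 hm a y)).
  by rewrite /A in xy *; lra.
rewrite /c; have -> : r `^ q = r^-1 `^ (- q) by rewrite powRV // opprK.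
rewrite -powRM ?(ltW ri0) //; apply: ler_powRN => //.
  exact: one_plus_dist_gt0.
have : A < 2 * r^-1 by rewrite -(ltr_pM2l r0) mulrCA rr mulr1.
by rewrite /A in xy *; lra.
Qed.

Definition large_ball_lower_const :=
  Num.min (infty_ball_const * 2 `^ (- q)) ((9 / 4) `^ (- q) / Cmu ^+ 6).

Lemma muhat_Ba_large_ge (x : option X) r : 0 < r -> r <= 2 -> dhat d a x / 6 <= r ->
  ((large_ball_lower_const * r `^ q)%:E * (vol a r^-1)%:E <= muhat (Ba d a x r))%E.
Proof.
move=> r0 r2 hx; have ri0 : 0 < r^-1 by rewrite invr_gt0.
have Cmu0 : 0 < Cmu := lt_le_trans ltr01 (doubling_const_ge1 hdb a).
have shrink c : large_ball_lower_const <= c ->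
    ((large_ball_lower_const * r `^ q)%:E * (vol a r^-1)%:E <=
     (c * r `^ q)%:E * (vol a r^-1)%:E)%E.
  move=> c_ge; rewrite lee_wpmul2r ?lee_fin ?(ltW (vol_gt0 _ ri0)) //.
  by rewrite ler_wpM2r ?powR_ge0.
case: x hx => [x|] hx; last first.
  apply: le_trans (shrink _ _) (muhat_Ba_infty_ge r0 r2).
  have := ler_powRN q_ge0 ltr01 (ler1n R 2); rewrite powR1 => two_q.
  by rewrite ge_min ler_piMr ?mulr_ge0 ?invr_ge0 ?powR_ge0 ?exprn_ge0 ?(ltW Cmu0).
move: hx; rewrite (le_dhat_divE hm) // => rA6.
have [rA2|rA2] := leP 2 (r * (1 + d a x)).
  by apply: le_trans (shrink _ _) (muhat_Ba_far_ge r0 r2 rA2); rewrite ge_min lexx.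
apply: le_trans (shrink _ _) (muhat_Ba_near_ge r0 rA2 rA6).
by rewrite ge_min lexx orbT.
Qed.

End large_balls_lower.

Section mass_lower_bound.
Variables (s Cs : R).
Hypothesis s_gt0 : 0 < s.
Hypothesis Cs_gt0 : 0 < Cs.
Hypothesis s_lt_q : s < q.
Hypothesis vol_ratio_ge : forall r R', 1 <= r -> r <= R' ->
  Cs * (r / R') `^ s <= vol a r / vol a R'.

Lemma q_gt0 : 0 < q. Proof. exact: lt_trans s_lt_q. Qed.

Lemma vol_dilate_le P rho : 1 <= rho -> 1 <= P ->
  vol a (P * rho) <= P `^ s / Cs * vol a rho.
Proof.
move=> rho1 P1; have rho0 := lt_le_trans ltr01 rho1.
have P0 := lt_le_trans ltr01 P1.
have := vol_ratio_ge rho1 (ler_peMl (ltW rho0) P1).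
have -> : rho / (P * rho) = P^-1 by field; rewrite !gt_eqF.
rewrite powRV // powRN ler_pdivlMr ?vol_gt0 ?mulr_gt0 // => h.
by rewrite -ler_pdivrMl ?divr_gt0 ?powR_gt0 // invf_div.
Qed.

Definition dyadic_term (rho : R) (k : nat) (y : X) : \bar R :=
  ((2 ^+ k * rho) `^ (- q) * \1_(dball d a (2 ^+ k.+1 * rho)) y)%:E.

Lemma dyadic_term_ge0 rho k y : (0 <= dyadic_term rho k y)%E.
Proof. by rewrite lee_fin mulr_ge0 ?powR_ge0. Qed.

Lemma measurable_dyadic_term rho k :
  measurable_fun [set: X] (dyadic_term rho k : X -> \bar R).
Proof.
apply/measurable_EFinP/measurable_funM; first exact: measurable_cst.
exact/measurable_indic/measurable_dball.
Qed.

Lemma weight_le_dyadic_series rho y : 0 < rho -> rho <= 1 + d a y ->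
  (((1 + d a y) `^ (- q))%:E <= \sum_(k <oo) dyadic_term rho k y)%E.
Proof.
move=> rho0 /(exists_dyadic_shell rho0) [k /andP[lo hi]].
apply: le_trans (nneseries_lim_ge k.+1 (fun n _ _ => dyadic_term_ge0 rho n y)).
rewrite big_nat_recr //=; apply: le_trans (leeDr _ _); last first.
  by rewrite sume_ge0 // => n _; exact: dyadic_term_ge0.
rewrite /dyadic_term indicE mem_set ?mulr1; last by rewrite /dball /=; lra.
by rewrite lee_fin ler_powRN ?(ltW q_gt0) // mulr_gt0 // exprn_gt0.
Qed.

Lemma integral_dyadic_term_le rho k : 1 <= rho ->
  (\int[mu]_(y in setT) dyadic_term rho k y <=
   ((rho `^ (- q) * 2 `^ s / Cs * vol a rho) * (2 `^ (s - q)) ^+ k)%:E)%E.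
Proof.
move=> rho1; have rho0 := lt_le_trans ltr01 rho1.
have ball0 : 0 < 2 ^+ k.+1 * rho by rewrite mulr_gt0 // exprn_gt0.
rewrite /dyadic_term; under eq_integral do rewrite EFinM.
rewrite ge0_integralZl_EFin ?powR_ge0 //; last first.
  exact/measurable_EFinP/measurable_indic/measurable_dball.
rewrite integral_indic ?setIT //; last exact: measurable_dball.
rewrite volE // -EFinM lee_fin.
have := vol_dilate_le rho1 (exprn_ege1 k.+1 (ler1n R 2)).
rewrite powR_exprn // => dilate.
apply: le_trans (ler_wpM2l (powR_ge0 _ _) dilate) _.
rewrite powRM ?exprn_ge0 ?(ltW rho0) // powR_exprn // powRD; last first.
  by apply/implyP => _; rewrite pnatr_eq0.
by rewrite !exprMn exprS le_eqVlt; apply/predU1P; left; ring.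
Qed.

Definition tail_const := 2 `^ s / Cs / (1 - 2 `^ (s - q)).

Lemma tail_const_gt0 : 0 < tail_const.
Proof.
rewrite /tail_const !divr_gt0 ?powR_gt0 // subr_gt0 powR_lt1 ?ltr1n //.
by rewrite subr_lt0.
Qed.

Lemma muhat_le_tail (A : set (option X)) rho : 1 <= rho ->
  (forall y, A (Some y) -> rho <= 1 + d a y) ->
  (muhat A <= ((rho `^ (- q) * tail_const) * vol a rho)%:E)%E.
Proof.
move=> rho1 A_far; have rho0 := lt_le_trans ltr01 rho1.
have z01 : 0 < 2 `^ (s - q) < 1.
  by rewrite powR_gt0 // powR_lt1 ?ltr1n // subr_lt0.
apply: (@le_trans _ _ (\int[mu]_(y in setT) \sum_(k <oo) dyadic_term rho k y)%E).
  apply: ge0_le_integral_subset => y; rewrite ?lee_fin ?powR_ge0 //.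
    by move=> _; apply: nneseries_ge0 => k _ _; exact: dyadic_term_ge0.
  by move=> /A_far; split => //; exact: weight_le_dyadic_series.
rewrite integral_nneseries //; first last.
- by move=> k y _; exact: dyadic_term_ge0.
- by move=> k; exact: measurable_dyadic_term.
set c := rho `^ (- q) * 2 `^ s / Cs * vol a rho.
have c0 : 0 <= c.
  by rewrite /c !mulr_ge0 ?invr_ge0 ?powR_ge0 ?(ltW Cs_gt0) ?(ltW (vol_gt0 a rho0)).
apply: (@le_trans _ _ (\sum_(k <oo) (c * 2 `^ (s - q) ^+ k)%:E)%E).
  apply: lee_nneseries => [k _ _|k _]; last exact: integral_dyadic_term_le.
  by apply: integral_ge0 => y _; exact: dyadic_term_ge0.
apply: le_trans (nneseries_geometric_le c0 z01) _.
rewrite lee_fin /c /tail_const le_eqVlt; apply/predU1P; left; field.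
by rewrite !gt_eqF ?subr_gt0 //; case/andP: z01.
Qed.

Lemma Ba_sub_tail (x : option X) r y : 0 < r -> dhat d a x / 6 <= r ->
  Ba d a x r (Some y) -> 1 < 7 * r * (1 + d a y).
Proof.
move=> r0; have B1 := one_plus_dist_ge1 hm a y.
case: x => [x|] hx; last by rewrite (Ba_NoneE hm); nra.
move: hx; rewrite (le_dhat_divE hm) // (Ba_SomeE hm).
set A := 1 + d a x; set B := 1 + d a y in B1 * => rA6 xy.
have A0 : 0 < A := one_plus_dist_gt0 hm a x.
have := metric_triangle hm a y x; rewrite (metric_sym hm y x) => tri.
have hB : B <= r * 6 * A * B by rewrite ler_peMl //; lra.
rewrite -(ltr_pM2l A0) mulr1.
rewrite (_ : A * (7 * r * B) = 7 * (r * (A * B))); last ring.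
by rewrite /A /B in xy hB *; lra.
Qed.

Section large_balls_upper.
Variable Cmu : R.
Hypothesis hdb : doubling d mu Cmu.

Definition large_ball_upper_const := tail_const * 7 `^ q * Cmu.

Lemma muhat_Ba_large_le (x : option X) r : 0 < r -> r <= 2 -> dhat d a x / 6 <= r ->
  (muhat (Ba d a x r) <= ((large_ball_upper_const * r `^ q) * vol a r^-1)%:E)%E.
Proof.
move=> r0 r2 hx; have ri0 : 0 < r^-1 by rewrite invr_gt0.
have Cmu1 := doubling_const_ge1 hdb a; have T0 := tail_const_gt0.
have q0 := ltW q_gt0; have r7 : 0 < 7 * r by rewrite mulr_gt0.
have far y : Ba d a x r (Some y) -> 1 < 7 * r * (1 + d a y) := Ba_sub_tail r0 hx.
have -> : large_ball_upper_const * r `^ q * vol a r^-1 =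
    (7 * r) `^ q * tail_const * (Cmu * vol a r^-1).
  by rewrite powRM ?(ltW r0) // /large_ball_upper_const; ring.
have Cvol : 0 <= Cmu * vol a r^-1.
  by rewrite mulr_ge0 ?(le_trans ler01 Cmu1) ?(ltW (vol_gt0 a ri0)).
have [r7_le1|r7_gt1] := leP (7 * r) 1.
- have rho1 : 1 <= (7 * r)^-1 by rewrite invf_ge1.
  apply: le_trans (muhat_le_tail rho1 _) _.
    by move=> y /far; rewrite -(ler_pM2l r7) mulfV ?gt_eqF //; lra.
  rewrite lee_fin powRV // opprK ler_wpM2l ?(mulr_ge0 (powR_ge0 _ _) (ltW T0)) //.
  apply: le_trans (le_vol _ _ _) (ler_peMl (ltW (vol_gt0 a ri0)) Cmu1).
    by rewrite invr_gt0.
  by rewrite lef_pV2 ?posrE //; lra.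
- apply: le_trans (muhat_le_tail (lexx 1) _) _.
    by move=> y _; exact: one_plus_dist_ge1.
  have vol1 : vol a 1 <= Cmu * vol a r^-1.
    apply: le_trans (vol_doubling hdb a ri0); apply: le_vol => //.
    by rewrite -[leLHS](mulfV (x := r)) ?gt_eqF // ler_pM2r.
  have r7q : 1 <= (7 * r) `^ q.
    have := ge0_ler_powR q0 (ler01 : 0 <= 1) (ltW r7) (ltW r7_gt1).
    by rewrite powR1.
  rewrite lee_fin powR1 mul1r -mulrA.
  apply: le_trans _ (ler_peMl (mulr_ge0 (ltW T0) Cvol) r7q).
  by rewrite ler_wpM2l ?(ltW T0).
Qed.

End large_balls_upper.

End mass_lower_bound.

End weighted_measure.

End metric_measure_space.

Unset Implicit Arguments.

Theorem lemma4p1 (R : realType) (q Cmu : R) :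
  exists2 C1 : R, 0 < C1 &
  forall (kappa s Cs : R), 0 < s -> 0 < Cs -> s < q ->
  exists2 C2 : R, 0 < C2 &
  forall (d0 : measure_display) (X : measurableType d0) (d : X -> X -> R)
         (mu : {measure set X -> \bar R}) (a : X),
    is_metric d ->
    (forall U, dopen d U -> measurable U) ->
    measure_is_complete mu ->
    (forall x r, 0 < r -> (0 < mu (dball d x r))%E /\ (mu (dball d x r) < +oo)%E) ->
    unbounded d ->
    unif_perfect_at d a kappa ->
    doubling d mu Cmu ->
    (forall r R' : R, 1 <= r -> r <= R' ->
       Cs * (r / R') `^ s <= fine (mu (dball d a r)) / fine (mu (dball d a R'))) ->
    (* first case *)
    (forall (x : X) (r : R), 0 < r -> r <= dhat d a (Some x) / 3 ->
       ((C1^-1)%:E * ((dhat d a (Some x) `^ q)%:E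
                        * mu (dball d x (r / (dhat d a (Some x)) ^+ 2))) <=
          muhat d a mu q (Ba d a (Some x) r) /\
        muhat d a mu q (Ba d a (Some x) r) <=
          C1%:E * ((dhat d a (Some x) `^ q)%:E
                     * mu (dball d x (r / (dhat d a (Some x)) ^+ 2))))%E) /\
    (* second case *)
    (forall (x : option X) (r : R), 0 < r -> dhat d a x / 6 <= r -> r <= 2 ->
       ((C2^-1)%:E * ((r `^ q)%:E * mu (dball d a r^-1)) <=
          muhat d a mu q (Ba d a x r) /\
        muhat d a mu q (Ba d a x r) <=
          C2%:E * ((r `^ q)%:E * mu (dball d a r^-1)))%E).
Proof.
(* Balls of positive measure force Cmu >= 1, and unif_perfect_at forces
   kappa > 1; otherwise the hypotheses are contradictory. *)
have [Cmu_lt1|Cmu1] := ltP Cmu 1.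
  exists 1 => // kappa s Cs _ _ _; exists 1 => // d0 X d mu a hm hop _ hpos _ _ hdb.
  by have := doubling_const_ge1 hm hop hpos hdb a; rewrite leNgt Cmu_lt1.
have Cmu0 : 0 < Cmu := lt_le_trans ltr01 Cmu1.
exists (2 `^ `|q| * Cmu); first by rewrite mulr_gt0 ?powR_gt0.
move=> kappa s Cs s0 Cs0 sq; have q0 : 0 < q := lt_trans s0 sq.
have [kappa_le1|kappa1] := leP kappa 1.
  by exists 1 => // d0 X d mu a _ _ _ _ _ [kappa_gt1]; exfalso; lra.
set c_lo := large_ball_lower_const q Cmu kappa.
set c_up := large_ball_upper_const q s Cs Cmu.
have c_lo0 : 0 < c_lo.
  by rewrite lt_min !mulr_gt0 ?invr_gt0 ?powR_gt0 ?exprn_gt0 //; lra.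
have c_up0 : 0 < c_up.
  by rewrite mulr_gt0 // mulr_gt0 ?powR_gt0 ?tail_const_gt0.
exists (c_up + c_lo^-1); first by rewrite addr_gt0 ?invr_gt0.
move=> d0 X d mu a hm hop _ hpos _ hup hdb hgr; split.
  by move=> x r; exact: muhat_Ba_small.
move=> x r r0 hx r2; have ri0 : 0 < r^-1 by rewrite invr_gt0.
rewrite (volE hpos) // -!EFinM; split.
- apply: le_trans (muhat_Ba_large_ge hm hop hpos hdb hup (ltW q0) r0 r2 hx).
  rewrite -!EFinM lee_fin mulrA ler_wpM2r ?(ltW (vol_gt0 hpos a ri0)) //.
  rewrite ler_wpM2r ?powR_ge0 // -/c_lo -[leRHS]invrK.
  by rewrite lef_pV2 ?posrE ?addr_gt0 ?invr_gt0 // lerDr ltW.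
- apply: le_trans (muhat_Ba_large_le hm hop hpos s0 Cs0 sq hgr hdb r0 r2 hx) _.
  rewrite lee_fin mulrA ler_wpM2r ?(ltW (vol_gt0 hpos a ri0)) //.
  by rewrite ler_wpM2r ?powR_ge0 // lerDl ltW ?invr_gt0.
Qed.
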